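(* Let $c>0$, let $d\ge 1$, and let $\eta=\mathrm{diag}(-1,+1,\dots,+1)$ be the Minkowski metric on $\mathbb{R}^{d+1}$ (indices lowered with $\eta$). Let $t\mapsto \vec{x}(t)\in\mathbb{R}^d$ be a smooth trajectory with $|\vec v|<c$, where $\vec v=\mathrm{d}\vec x/\mathrm{d}t$, $\vec a=\mathrm{d}\vec v/\mathrm{d}t$, and $\gamma=(1-\vec v^{\,2}/c^2)^{-1/2}$. Let $\tau$ be proper time, $\mathrm{d}t/\mathrm{d}\tau=\gamma$, let $x^\mu(\tau)=(ct,\vec x)$ be the worldline, $v^\mu=\mathrm{d}x^\mu/\mathrm{d}\tau=(\gamma c,\gamma\vec v)$ and $a^\mu=\mathrm{d}v^\mu/\mathrm{d}\tau$. Define $(d+1)$-vectors recursively by $P_{(1)}^\mu=a^\mu$ and $$P_{(n)}^\mu=\Big(\delta^\mu_{\ \nu}+\frac{v^\mu v_\nu}{c^2}\Big)\frac{\mathrm{d}}{\mathrm{d}\tau}P_{(n-1)}^\nu,\qquad n\ge 2.$$ Let $\hat M$ be the $d\times d$ matrix $\hat M_{ij}=\delta_{ij}+\frac{\gamma^2}{c^2}v_iv_j$. Define $d$-vectors $\vec Q_{(n)}$ by $\vec Q_{(1)}=\vec a$ and $$\vec Q_{(n)}=\frac{1}{\gamma^n}\frac{\mathrm{d}}{\mathrm{d}t}\big(\gamma^n\vec Q_{(n-1)}\big)+\frac{\gamma^2}{c^2}\big(\vec v\cdot\vec Q_{(n-1)}\big)\vec a,\qquad n\ge 2.$$ Then for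 every $n\ge 1$, $$P_{(n)}^\mu=\Big(\frac{\gamma^{n+3}}{c}\,\vec v\cdot\vec Q_{(n)},\ \gamma^{n+1}\hat M\vec Q_{(n)}\Big),$$ where the first entry is the time component and the second the spatial components.
   Context: Dots denote Euclidean inner products in $\mathbb{R}^d$. $\hat M$ is invertible with inverse $\hat M^{-1}_{ij}=\delta_{ij}-v_iv_j/c^2$. *)

From Stdlib Require Import Reals Lra.
From Coquelicot Require Import Coquelicot.
Open Scope R_scope.

Fixpoint sumR (n : nat) (f : nat -> R) : R :=
  match n with O => 0 | S k => sumR k f + f k end.

Section Kinematics.
(* c : speed of light, d : spatial dimension,
   x i t : i-th spatial component (0 <= i < d) of the trajectory at time t. *)
Variables (c : R) (d : nat) (x : nat -> R -> R).

Definition smooth_traj : Prop :=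
  forall i, (i < d)%nat -> forall (k : nat) (t : R), ex_derive (Derive_n (x i) k) t.

Definition vel (i : nat) (t : R) : R := Derive (x i) t.
Definition acc (i : nat) (t : R) : R := Derive (vel i) t.

Definition dotE (u w : nat -> R) : R := sumR d (fun i => u i * w i).

Definition gam (t : R) : R :=
  / sqrt (1 - dotE (fun i => vel i t) (fun i => vel i t) / c ^ 2).

(* Q n i t = i-th component of Q_(n) at time t  (n >= 1; Q 0 is a dummy). *)
Fixpoint Q (n : nat) : nat -> R -> R :=
  match n with
  | O => acc
  | S O => acc
  | S m => fun i t =>
      / (gam t ^ (S m)) * Derive (fun s => gam s ^ (S m) * Q m i s) t
      + gam t ^ 2 / c ^ 2 * dotE (fun j => vel j t) (fun j => Q m j t) * acc i t
  end.

(* Spacetime vectors: index 0 is the time component, index (S i) is the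
   spatial component i (0 <= i < d). *)
Definition xmu (mu : nat) (t : R) : R :=
  match mu with O => c * t | S i => x i t end.

(* d/dtau, with dt/dtau = gamma (chain rule), acting on functions of t *)
Definition Dtau (f : R -> R) (t : R) : R := gam t * Derive f t.

Definition vmu (mu : nat) (t : R) : R := Dtau (xmu mu) t.
Definition amu (mu : nat) (t : R) : R := Dtau (vmu mu) t.

Definition mdot (u w : nat -> R) : R :=
  - (u O * w O) + sumR d (fun i => u (S i) * w (S i)).

Definition proj (vv w : nat -> R) (mu : nat) : R :=
  w mu + vv mu * mdot vv w / c ^ 2.

(* P n mu t = P_(n)^mu at (the proper time corresponding to) time t; n >= 1. *)
Fixpoint P (n : nat) : nat -> R -> R :=
  match n with
  | O => amu
  | S O => amu
  | S m => fun mu t =>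
      proj (fun nu => vmu nu t) (fun nu => Dtau (P m nu) t) mu
  end.

Definition Mhat (i j : nat) (t : R) : R :=
  (if Nat.eqb i j then 1 else 0) + gam t ^ 2 / c ^ 2 * vel i t * vel j t.

End Kinematics.

(* Write u = v^mu for the four-velocity.  Since u.u = -c^2, the operator
   delta + u u / c^2 of the recursion is the projection Pi onto the Minkowski
   orthogonal complement of u, and Pi (0, q) = (gamma^2 v.q / c, M q); so the
   claim is P_(n) = gamma^(n+1) Pi (0, Q_(n)).  Because Pi u = 0 and du/dtau is
   orthogonal to u, differentiating along the worldline gives
   Pi d/dtau (Pi w) = Pi dw/dtau + (u.w / c^2) du/dtau.  For
   w = gamma^(n+1) (0, Q_(n)) the recursion for Q_(n+1) turns dw/dtau into
   gamma^(n+2) (0, Q_(n+1) - gamma^2/c^2 (v.Q_(n)) a), and since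
   du/dtau = a^mu = gamma^2 Pi (0, a) the second term cancels exactly the
   correction in a, which is the induction step. *)

From Stdlib Require Import Reals Lra Lia FunctionalExtensionality.
From Coquelicot Require Import Coquelicot.
Open Scope R_scope.

(* Real instances of Coquelicot's generic rules, which [apply] does not unify
   with [Rplus] and [0] directly. *)
Lemma is_derive_Rplus (f g : R -> R) (t a b : R) :
  is_derive f t a -> is_derive g t b -> is_derive (fun s => f s + g s) t (a + b).
Proof. intros; now apply (is_derive_plus f g). Qed.

Lemma is_derive_Rconst (a t : R) : is_derive (fun _ => a) t 0.
Proof. apply (is_derive_const (K := R_AbsRing) a t). Qed.

Fixpoint ex_derive_upto (k : nat) (f : R -> R) : Prop :=
  (forall t, ex_derive f t) /\
  match k with O => True | S k => ex_derive_upto k (Derive f) end.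

Definition smooth (f : R -> R) : Prop := forall k, ex_derive_upto k f.

Lemma ex_derive_upto_pred k f : ex_derive_upto (S k) f -> ex_derive_upto k f.
Proof. revert f; induction k as [|k IH]; intros f [Hf Hdf]; split; auto. Qed.

Lemma ex_derive_upto_const k a : ex_derive_upto k (fun _ => a).
Proof.
  revert a; induction k as [|k IH]; intros a; split; auto using ex_derive_const.
  replace (Derive (fun _ => a)) with (fun _ : R => 0); [apply IH|].
  apply functional_extensionality; intros t; now rewrite Derive_const.
Qed.

Lemma ex_derive_upto_plus k f g :
  ex_derive_upto k f -> ex_derive_upto k g -> ex_derive_upto k (fun s => f s + g s).
Proof.
  revert f g; induction k as [|k IH]; intros f g [Hf Hdf] [Hg Hdg];
    split; try (intros t; now apply (ex_derive_plus f g)).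
  - exact I.
  - replace (Derive (fun s => f s + g s)) with (fun s => Derive f s + Derive g s);
      [now apply IH|].
    apply functional_extensionality; intros t; now rewrite Derive_plus.
Qed.

Lemma ex_derive_upto_mult k f g :
  ex_derive_upto k f -> ex_derive_upto k g -> ex_derive_upto k (fun s => f s * g s).
Proof.
  revert f g; induction k as [|k IH]; intros f g Hf Hg;
    pose proof Hf as [Hf1 Hdf]; pose proof Hg as [Hg1 Hdg];
    split; try (intros t; now apply ex_derive_mult).
  - exact I.
  - replace (Derive (fun s => f s * g s))
      with (fun s => Derive f s * g s + f s * Derive g s).
    + apply ex_derive_upto_plus; apply IH; auto using ex_derive_upto_pred.
    + apply functional_extensionality; intros t; now rewrite Derive_mult.
Qed.

Lemma ex_derive_upto_pow k f m :
  ex_derive_upto k f -> ex_derive_upto k (fun s => f s ^ m).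
Proof.
  intros Hf; induction m; simpl; auto using ex_derive_upto_const, ex_derive_upto_mult.
Qed.

Lemma ex_derive_upto_of_Derive_n k f :
  (forall j t, ex_derive (Derive_n f j) t) -> ex_derive_upto k f.
Proof.
  revert f; induction k as [|k IH]; intros f Hf; split; try exact (Hf O).
  - exact I.
  - apply IH; intros j t.
    replace (Derive_n (Derive f) j) with (Derive_n f (S j)); [apply Hf|].
    induction j as [|j IHj]; [reflexivity|].
    change (Derive (Derive_n f (S j)) = Derive (Derive_n (Derive f) j)).
    now rewrite IHj.
Qed.

Lemma smooth_Derive_n f : (forall k t, ex_derive (Derive_n f k) t) -> smooth f.
Proof. intros Hf k; now apply ex_derive_upto_of_Derive_n. Qed.

Lemma smooth_is_derive f t : smooth f -> is_derive f t (Derive f t).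
Proof. intros Hf; apply Derive_correct, (Hf O). Qed.

Lemma smooth_Derive f : smooth f -> smooth (Derive f).
Proof. intros Hf k; apply (Hf (S k)). Qed.

Lemma smooth_const a : smooth (fun _ => a).
Proof. intros k; apply ex_derive_upto_const. Qed.

Lemma smooth_plus f g : smooth f -> smooth g -> smooth (fun s => f s + g s).
Proof. intros Hf Hg k; now apply ex_derive_upto_plus. Qed.

Lemma smooth_mult f g : smooth f -> smooth g -> smooth (fun s => f s * g s).
Proof. intros Hf Hg k; now apply ex_derive_upto_mult. Qed.

Lemma smooth_pow f m : smooth f -> smooth (fun s => f s ^ m).
Proof. intros Hf k; now apply ex_derive_upto_pow. Qed.

Lemma smooth_sumR n (f : nat -> R -> R) :
  (forall i, (i < n)%nat -> smooth (f i)) -> smooth (fun s => sumR n (fun i => f i s)).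
Proof.
  induction n as [|n IH]; intros Hf; simpl.
  - apply smooth_const.
  - apply smooth_plus; [apply IH; intros; apply Hf|apply Hf]; lia.
Qed.

Lemma smooth_ode f h m :
  smooth h -> (forall t, is_derive f t (f t ^ m * h t)) -> smooth f.
Proof.
  intros Hh Hf k; induction k as [|k IH]; split; try (intros t; eexists; apply Hf).
  - exact I.
  - replace (Derive f) with (fun t => f t ^ m * h t).
    + now apply ex_derive_upto_mult, Hh; apply ex_derive_upto_pow.
    + apply functional_extensionality; intros t; symmetry; apply is_derive_unique, Hf.
Qed.

Lemma smooth_inv f : smooth f -> (forall t, f t <> 0) -> smooth (fun t => / f t).
Proof.
  intros Hf Hf0; apply smooth_ode with (m := 2%nat) (h := fun t => -1 * Derive f t).
  - apply smooth_mult; [apply smooth_const|now apply smooth_Derive].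
  - intros t; evar_last; [apply is_derive_inv; auto using smooth_is_derive|].
    field; auto.
Qed.

Lemma sumR_ext n (f g : nat -> R) :
  (forall i, (i < n)%nat -> f i = g i) -> sumR n f = sumR n g.
Proof.
  induction n as [|n IH]; intros Hfg; simpl; [reflexivity|].
  rewrite IH by (intros; apply Hfg; lia).
  rewrite (Hfg n) by lia; reflexivity.
Qed.

Lemma sumR_plus n (f g : nat -> R) :
  sumR n (fun i => f i + g i) = sumR n f + sumR n g.
Proof. induction n as [|n IH]; simpl; [ring|rewrite IH; ring]. Qed.

Lemma sumR_scal n k (f : nat -> R) : sumR n (fun i => k * f i) = k * sumR n f.
Proof. induction n as [|n IH]; simpl; [ring|rewrite IH; ring]. Qed.

Lemma sumR_kronecker n i (w : nat -> R) :
  sumR n (fun j => (if Nat.eqb i j then 1 else 0) * w j)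
  = if Nat.ltb i n then w i else 0.
Proof.
  induction n as [|n IH]; cbn [sumR]; [reflexivity|rewrite IH].
  destruct (Nat.ltb_spec i n), (Nat.eqb_spec i n), (Nat.ltb_spec i (S n));
    try lia; subst; ring.
Qed.

Lemma is_derive_sumR n (f : nat -> R -> R) (f' : nat -> R) t :
  (forall i, (i < n)%nat -> is_derive (f i) t (f' i)) ->
  is_derive (fun s => sumR n (fun i => f i s)) t (sumR n f').
Proof.
  induction n as [|n IH]; intros Hf; simpl.
  - apply is_derive_Rconst.
  - apply is_derive_Rplus; [apply IH; intros; apply Hf|apply Hf]; lia.
Qed.

Definition spatial (q : nat -> R) (mu : nat) : R :=
  match mu with O => 0 | S i => q i end.

Section Minkowski.
Variables (c : R) (d : nat).
Hypothesis c_neq0 : c <> 0.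

Lemma mdot_ext u w w' :
  (forall nu, (nu <= d)%nat -> w nu = w' nu) -> mdot d u w = mdot d u w'.
Proof.
  intros Hw; unfold mdot; rewrite Hw by lia.
  f_equal; apply sumR_ext; intros i Hi; rewrite Hw by lia; reflexivity.
Qed.

Lemma mdot_plus u w z :
  mdot d u (fun nu => w nu + z nu) = mdot d u w + mdot d u z.
Proof.
  unfold mdot.
  rewrite (sumR_ext d _ (fun i => u (S i) * w (S i) + u (S i) * z (S i))) by (intros; ring).
  rewrite sumR_plus; ring.
Qed.

Lemma mdot_scal u w k : mdot d u (fun nu => k * w nu) = k * mdot d u w.
Proof.
  unfold mdot.
  rewrite (sumR_ext d _ (fun i => k * (u (S i) * w (S i)))) by (intros; ring).
  rewrite sumR_scal; ring.
Qed.

Lemma mdot_spatial u q : mdot d u (spatial q) = sumR d (fun i => u (S i) * q i).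
Proof. unfold mdot; simpl; ring. Qed.

Lemma proj_ext u w w' mu :
  (forall nu, (nu <= d)%nat -> w nu = w' nu) -> (mu <= d)%nat ->
  proj c d u w mu = proj c d u w' mu.
Proof. intros Hw Hmu; unfold proj; rewrite Hw, (mdot_ext u w w'); auto. Qed.

Lemma proj_plus u w z mu :
  proj c d u (fun nu => w nu + z nu) mu = proj c d u w mu + proj c d u z mu.
Proof. unfold proj; rewrite mdot_plus; field; auto. Qed.

Lemma proj_scal u w k mu :
  proj c d u (fun nu => k * w nu) mu = k * proj c d u w mu.
Proof. unfold proj; rewrite mdot_scal; field; auto. Qed.

Section Unit_timelike.
Variable u : nat -> R.
Hypothesis mdot_uu : mdot d u u = - c ^ 2.

Lemma proj_self mu : proj c d u u mu = 0.
Proof. unfold proj; rewrite mdot_uu; field; auto. Qed.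

Lemma proj_orth w mu : mdot d u w = 0 -> proj c d u w mu = w mu.
Proof. intros Huw; unfold proj; rewrite Huw; field; auto. Qed.

Lemma mdot_proj w : mdot d u (fun nu => proj c d u w nu) = 0.
Proof.
  unfold proj; rewrite mdot_plus.
  rewrite (mdot_ext u (fun nu => u nu * mdot d u w / c ^ 2)
             (fun nu => (mdot d u w / c ^ 2) * u nu)) by (intros; field; auto).
  rewrite mdot_scal, mdot_uu; field; auto.
Qed.

Lemma proj_plus_orth_self w u' k m mu : mdot d u u' = 0 ->
  proj c d u (fun nu => w nu + k * u' nu + m * u nu) mu = proj c d u w mu + k * u' mu.
Proof.
  intros Huu'; rewrite !proj_plus, !proj_scal, proj_self, (proj_orth u' mu Huu'); ring.
Qed.

End Unit_timelike.

Lemma is_derive_mdot (U W : R -> nat -> R) (U' W' : nat -> R) t :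
  (forall nu, (nu <= d)%nat -> is_derive (fun s => U s nu) t (U' nu)) ->
  (forall nu, (nu <= d)%nat -> is_derive (fun s => W s nu) t (W' nu)) ->
  is_derive (fun s => mdot d (U s) (W s)) t (mdot d U' (W t) + mdot d (U t) W').
Proof.
  intros HU HW; unfold mdot.
  evar_last.
  - apply is_derive_Rplus.
    + apply (is_derive_opp (fun s => U s O * W s O)).
      apply Derive.is_derive_mult; [apply HU|apply HW]; lia.
    + apply is_derive_sumR with (f := fun i s => U s (S i) * W s (S i)); intros i Hi.
      apply Derive.is_derive_mult; [apply HU|apply HW]; lia.
  - cbn; rewrite sumR_plus; ring.
Qed.

Lemma is_derive_proj (U W : R -> nat -> R) (U' W' : nat -> R) t mu :
  (forall nu, (nu <= d)%nat -> is_derive (fun s => U s nu) t (U' nu)) ->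
  (forall nu, (nu <= d)%nat -> is_derive (fun s => W s nu) t (W' nu)) ->
  (mu <= d)%nat ->
  is_derive (fun s => proj c d (U s) (W s) mu) t
    (W' mu + mdot d (U t) (W t) / c ^ 2 * U' mu
     + (mdot d U' (W t) + mdot d (U t) W') / c ^ 2 * U t mu).
Proof.
  intros HU HW Hmu; unfold proj.
  evar_last.
  - apply is_derive_Rplus; [now apply HW|].
    apply Derive.is_derive_mult; [apply Derive.is_derive_mult|apply is_derive_Rconst].
    + now apply HU.
    + now apply (is_derive_mdot U W U' W').
  - cbv beta; field; auto.
Qed.

End Minkowski.

Section Kinematics.
Variables (c : R) (d : nat) (x : nat -> R -> R).
Hypothesis c_pos : 0 < c.
Hypothesis x_smooth : smooth_traj d x.
Hypothesis subluminal :
  forall t, dotE d (fun i => vel x i t) (fun i => vel x i t) < c ^ 2.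

Local Notation gamma := (gam c d x).
Local Notation u t := (fun mu => vmu c d x mu t).

Let c_neq0 : c <> 0.
Proof. lra. Qed.

Lemma smooth_vel i : (i < d)%nat -> smooth (vel x i).
Proof. intros Hi; apply smooth_Derive, smooth_Derive_n, x_smooth, Hi. Qed.

Lemma smooth_acc i : (i < d)%nat -> smooth (acc x i).
Proof. intros Hi; apply smooth_Derive, smooth_vel, Hi. Qed.

Lemma one_sub_beta2_pos t :
  0 < 1 - dotE d (fun i => vel x i t) (fun i => vel x i t) / c ^ 2.
Proof.
  assert (0 < c ^ 2) by (apply pow_lt; lra).
  specialize (subluminal t).
  apply Rlt_0_minus, Rlt_div_l; lra.
Qed.

Lemma gam_pos t : 0 < gamma t.
Proof. apply Rinv_0_lt_compat, sqrt_lt_R0, one_sub_beta2_pos. Qed.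

Lemma gam_sqr t :
  gamma t ^ 2 * (1 - dotE d (fun i => vel x i t) (fun i => vel x i t) / c ^ 2) = 1.
Proof.
  pose proof (one_sub_beta2_pos t) as Hh; unfold gam.
  set (h := 1 - _ / c ^ 2) in *.
  assert (Hsqrt : sqrt h ^ 2 = h) by (apply pow2_sqrt; lra).
  assert (sqrt h <> 0) by apply Rgt_not_eq, sqrt_lt_R0, Hh.
  rewrite <- Hsqrt at 2; field; assumption.
Qed.

Lemma is_derive_speed_sqr t :
  is_derive (fun s => dotE d (fun i => vel x i s) (fun i => vel x i s)) t
    (2 * dotE d (fun i => vel x i t) (fun i => acc x i t)).
Proof.
  unfold dotE; evar_last.
  - apply is_derive_sumR with (f := fun i s => vel x i s * vel x i s); intros i Hi.
    apply Derive.is_derive_mult; apply smooth_is_derive, smooth_vel, Hi.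
  - rewrite <- sumR_scal; apply sumR_ext; intros i _; unfold acc; ring.
Qed.

Lemma is_derive_gam t :
  is_derive gamma t (gamma t ^ 3 * (dotE d (fun i => vel x i t) (fun i => acc x i t) / c ^ 2)).
Proof.
  pose proof (one_sub_beta2_pos t) as Hh.
  assert (sqrt (1 - dotE d (fun i => vel x i t) (fun i => vel x i t) / c ^ 2) <> 0)
    by apply Rgt_not_eq, sqrt_lt_R0, Hh.
  evar_last.
  - apply is_derive_inv; [apply is_derive_sqrt; [|exact Hh]|assumption].
    apply (is_derive_minus (fun _ => 1)
             (fun s => dotE d (fun i => vel x i s) (fun i => vel x i s) / c ^ 2)).
    + apply is_derive_Rconst.
    + apply Derive.is_derive_mult; [apply is_derive_speed_sqr|apply is_derive_Rconst].
  - unfold gam; cbn; field; auto.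
Qed.

Lemma smooth_gam : smooth gamma.
Proof.
  apply smooth_ode with (m := 3%nat)
    (h := fun t => dotE d (fun i => vel x i t) (fun i => acc x i t) / c ^ 2).
  - apply smooth_mult; [|apply smooth_const].
    apply smooth_sumR with (f := fun i t => vel x i t * acc x i t); intros i Hi.
    apply smooth_mult; [apply smooth_vel|apply smooth_acc]; exact Hi.
  - exact is_derive_gam.
Qed.

Lemma gam_neq0 t : gamma t <> 0.
Proof. apply Rgt_not_eq, gam_pos. Qed.

Lemma gam_pow_neq0 t m : gamma t ^ m <> 0.
Proof. apply pow_nonzero, gam_neq0. Qed.

Lemma vmu_0 t : vmu c d x 0 t = gamma t * c.
Proof.
  unfold vmu, Dtau; f_equal.
  change (Derive (fun s => c * s) t = c).
  rewrite Derive_scal, Derive_id; ring.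
Qed.

Lemma vmu_S i t : vmu c d x (S i) t = gamma t * vel x i t.
Proof. reflexivity. Qed.

Lemma mdot_vmu_spatial t q :
  mdot d (u t) (spatial q) = gamma t * dotE d (fun i => vel x i t) q.
Proof.
  rewrite mdot_spatial; unfold dotE; rewrite <- sumR_scal.
  apply sumR_ext; intros i _; rewrite vmu_S; ring.
Qed.

Lemma mdot_vmu_self t : mdot d (u t) (u t) = - c ^ 2.
Proof.
  rewrite <- (Rmult_1_r (- c ^ 2)), <- (gam_sqr t).
  unfold mdot; rewrite vmu_0.
  rewrite (sumR_ext d _ (fun i => gamma t ^ 2 * (vel x i t * vel x i t)))
    by (intros; rewrite vmu_S; ring).
  rewrite sumR_scal; unfold dotE; field; auto.
Qed.

Lemma is_derive_vmu t mu : (mu <= d)%nat ->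
  is_derive (fun s => vmu c d x mu s) t
    (gamma t * proj c d (u t) (spatial (fun i => acc x i t)) mu).
Proof.
  intros Hmu; unfold proj; rewrite mdot_vmu_spatial.
  destruct mu as [|i].
  - apply (is_derive_ext (fun s => gamma s * c)); [intros s; symmetry; apply vmu_0|].
    evar_last; [apply Derive.is_derive_mult; [apply is_derive_gam|apply is_derive_Rconst]|].
    cbn; rewrite vmu_0; field; auto.
  - change (is_derive (fun s => gamma s * vel x i s) t
      (gamma t * (acc x i t + vmu c d x (S i) t
         * (gamma t * dotE d (fun j => vel x j t) (fun j => acc x j t)) / c ^ 2))).
    evar_last.
    + apply Derive.is_derive_mult; [apply is_derive_gam|].
      apply smooth_is_derive, smooth_vel; lia.
    + rewrite vmu_S; change (Derive (vel x i) t) with (acc x i t); field; auto.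
Qed.

Lemma Q_succ n i t : (1 <= n)%nat ->
  Q c d x (S n) i t
  = / gamma t ^ S n * Derive (fun s => gamma s ^ S n * Q c d x n i s) t
    + gamma t ^ 2 / c ^ 2 * dotE d (fun j => vel x j t) (fun j => Q c d x n j t)
      * acc x i t.
Proof. intros Hn; destruct n as [|n]; [lia|reflexivity]. Qed.

Lemma P_succ n mu t : (1 <= n)%nat ->
  P c d x (S n) mu t = proj c d (u t) (fun nu => Dtau c d x (P c d x n nu) t) mu.
Proof. intros Hn; destruct n as [|n]; [lia|reflexivity]. Qed.

Lemma smooth_Q n i : (i < d)%nat -> smooth (Q c d x n i).
Proof.
  revert i; induction n as [|n IH]; intros i Hi; [now apply smooth_acc|].
  destruct n as [|n]; [now apply smooth_acc|].
  apply smooth_plus; [apply smooth_mult|apply smooth_mult; [apply smooth_mult|]].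
  - apply smooth_inv; [apply smooth_pow, smooth_gam|intros; apply gam_pow_neq0].
  - apply smooth_Derive, smooth_mult; [apply smooth_pow, smooth_gam|now apply IH].
  - apply smooth_mult; [apply smooth_pow, smooth_gam|apply smooth_const].
  - apply smooth_sumR with (f := fun j t => vel x j t * Q c d x (S n) j t); intros j Hj.
    apply smooth_mult; [apply smooth_vel|apply IH]; exact Hj.
  - now apply smooth_acc.
Qed.

Lemma is_derive_gam_pow_Q n i t : (1 <= n)%nat -> (i < d)%nat ->
  is_derive (fun s => gamma s ^ S n * Q c d x n i s) t
    (gamma t ^ S n * (Q c d x (S n) i t
       - gamma t ^ 2 / c ^ 2 * dotE d (fun j => vel x j t) (fun j => Q c d x n j t)
         * acc x i t)).
Proof.
  intros Hn Hi; evar_last.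
  - apply smooth_is_derive, smooth_mult; [apply smooth_pow, smooth_gam|now apply smooth_Q].
  - rewrite Q_succ by exact Hn; cbn; field.
    repeat split; auto using gam_neq0, gam_pow_neq0.
Qed.

Lemma P_one_eq_proj t mu : (mu <= d)%nat ->
  P c d x 1 mu t = gamma t ^ 2 * proj c d (u t) (spatial (fun i => Q c d x 1 i t)) mu.
Proof.
  intros Hmu; change (P c d x 1 mu t) with (gamma t * Derive (vmu c d x mu) t).
  rewrite (is_derive_unique (vmu c d x mu) t _ (is_derive_vmu t mu Hmu)).
  change (Q c d x 1) with (acc x); ring.
Qed.

Lemma P_succ_eq_proj n : (1 <= n)%nat ->
  (forall s nu, (nu <= d)%nat ->
     P c d x n nu s = gamma s ^ S n * proj c d (u s) (spatial (fun i => Q c d x n i s)) nu) ->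
  forall t mu, (mu <= d)%nat ->
  P c d x (S n) mu t
  = gamma t ^ S (S n) * proj c d (u t) (spatial (fun i => Q c d x (S n) i t)) mu.
Proof.
  intros Hn IH t mu Hmu.
  set (DQ := dotE d (fun j => vel x j t) (fun j => Q c d x n j t)).
  set (a := spatial (fun i => acc x i t)).
  set (W := fun s nu => gamma s ^ S n * spatial (fun i => Q c d x n i s) nu).
  set (W' := fun nu => gamma t ^ S n * spatial (fun i => Q c d x (S n) i t) nu
                       + (- gamma t ^ S n * (gamma t ^ 2 / c ^ 2 * DQ)) * a nu).
  set (U' := fun nu => gamma t * proj c d (u t) a nu).
  assert (HW : forall nu, (nu <= d)%nat -> is_derive (fun s => W s nu) t (W' nu)).
  { intros [|i] Hi; unfold W, W', a; cbn [spatial].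
    - evar_last.
      + apply Derive.is_derive_mult;
          [apply smooth_is_derive, smooth_pow, smooth_gam|apply is_derive_Rconst].
      + cbv beta; ring.
    - evar_last; [apply is_derive_gam_pow_Q; lia|fold DQ; ring]. }
  assert (HP : forall nu, (nu <= d)%nat -> P c d x n nu = fun s => proj c d (u s) (W s) nu).
  { intros nu Hnu; apply functional_extensionality; intros s.
    rewrite IH by assumption; unfold W; now rewrite proj_scal. }
  assert (HU' : mdot d (u t) U' = 0).
  { unfold U'; rewrite mdot_scal, (mdot_proj c d c_neq0 _ (mdot_vmu_self t)); ring. }
  rewrite P_succ by exact Hn.
  rewrite (proj_ext c d (u t) _ (fun nu => gamma t *
             (W' nu + mdot d (u t) (W t) / c ^ 2 * U' nu
              + (mdot d U' (W t) + mdot d (u t) W') / c ^ 2 * vmu c d x nu t)))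
    by (try assumption; intros nu Hnu; unfold Dtau; rewrite HP by exact Hnu;
        f_equal; apply is_derive_unique, is_derive_proj; auto using is_derive_vmu).
  rewrite (proj_scal c d c_neq0),
    (proj_plus_orth_self c d c_neq0 _ (mdot_vmu_self t) _ U' _ _ _ HU').
  unfold W', U', W.
  rewrite proj_plus, !proj_scal, mdot_scal, mdot_vmu_spatial by exact c_neq0.
  fold DQ; change (gamma t ^ S (S n)) with (gamma t * gamma t ^ S n).
  field; exact c_neq0.
Qed.

Lemma P_eq_proj n : (1 <= n)%nat -> forall t mu, (mu <= d)%nat ->
  P c d x n mu t = gamma t ^ S n * proj c d (u t) (spatial (fun i => Q c d x n i t)) mu.
Proof.
  induction n as [|n IH]; intros Hn; [lia|].
  destruct (Nat.eq_dec n 0) as [->|Hn0]; [exact P_one_eq_proj|].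
  apply P_succ_eq_proj; [lia|apply IH; lia].
Qed.

Lemma sumR_Mhat i q t : (i < d)%nat ->
  sumR d (fun j => Mhat c d x i j t * q j)
  = q i + gamma t ^ 2 / c ^ 2 * vel x i t * dotE d (fun j => vel x j t) q.
Proof.
  intros Hi; unfold Mhat, dotE.
  rewrite (sumR_ext d _ (fun j => (if Nat.eqb i j then 1 else 0) * q j
             + gamma t ^ 2 / c ^ 2 * vel x i t * (vel x j t * q j))) by (intros; ring).
  rewrite sumR_plus, sumR_scal, sumR_kronecker.
  apply Nat.ltb_lt in Hi; rewrite Hi; reflexivity.
Qed.

End Kinematics.

Theorem proposition1 (c : R) (d : nat) (x : nat -> R -> R)
  (Hc : 0 < c) (Hd : (1 <= d)%nat)
  (Hsmooth : smooth_traj d x)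
  (Hsub : forall t, dotE d (fun i => vel x i t) (fun i => vel x i t) < c ^ 2) :
  forall (n : nat), (1 <= n)%nat -> forall t : R,
    P c d x n O t
      = gam c d x t ^ (n + 3) / c
        * dotE d (fun i => vel x i t) (fun i => Q c d x n i t)
    /\ forall i, (i < d)%nat ->
       P c d x n (S i) t
       = gam c d x t ^ (n + 1)
         * sumR d (fun j => Mhat c d x i j t * Q c d x n j t).
Proof.
  intros n Hn t.
  pose proof (P_eq_proj c d x Hc Hsmooth Hsub n Hn t) as HP.
  split; [|intros i Hi]; rewrite HP by lia; unfold proj; rewrite mdot_vmu_spatial.
  - rewrite vmu_0; cbn [spatial].
    replace (n + 3)%nat with (S n + 2)%nat by lia; rewrite pow_add.
    field; lra.
  - rewrite vmu_S, sumR_Mhat by assumption; cbn [spatial].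
    replace (n + 1)%nat with (S n) by lia.
    field; lra.
Qed.
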